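(* There is an absolute constant $C>0$ such that the following holds for every $n\ge 2$, every connected $n$-node graph $G_0$ and every node $u$. Let $T=\lceil Cn\ln n\rceil$ and run the triangulation process from $G_0$. Then the probability of the event that (for every $t<T$, more than $\delta_0/4$ nodes of $N^1_t(u)$ are strongly tied to $N^2_t(u)$ at round $t$) and $d_T(u)<\tfrac54\delta_0$ is at most $1/n^2$.
   Context: Triangulation process: $G_0$ is a connected simple undirected graph on an $n$-node vertex set $V$. Given $G_t$, in round $t$ every node $x$ independently picks two neighbors $v,w$ of $x$ in $G_t$, independently and uniformly at random, and the edge $\{v,w\}$ is added (nothing happens if $v=w$ or the edge already exists); $G_{t+1}$ is $G_t$ together with all edges added in round $t$. Edges are never removed. Notation: $d_t(x)$ is the degree of $x$ in $G_t$; $\delta_t$ is the minimum degree of $G_t$; $N^i_t(x)$ is the set of nodes at distance exactly $i$ from $x$ in $G_t$; for a set $S$, $d_t(x,S)$ is the number of neighbors of $x$ in $G_t$ lying in $S$. A node $x$ is strongly tied to a set $S$ at round $t$ if $d_t(x,S)\ge \delta_0/2$, and weakly tied to $S$ at round $t$ if $d_t(x,S)<\delta_0/2$. *)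

From HB Require Import structures.
From Stdlib Require Import Reals.
From mathcomp Require Import all_boot.
Set Implicit Arguments. Unset Strict Implicit. Unset Printing Implicit Defensive.

Definition graph (n : nat) := {ffun 'I_n -> {set 'I_n}}.

Definition adj n (G : graph n) : rel 'I_n := fun x y => y \in G x.

Definition simple_graph n (G : graph n) : Prop :=
  (forall x y : 'I_n, (y \in G x) = (x \in G y)) /\ (forall x : 'I_n, x \notin G x).

Definition connected_graph n (G : graph n) : Prop :=
  forall x y : 'I_n, connect (adj G) x y.

Definition deg n (G : graph n) (x : 'I_n) : nat := #|G x|.
Definition deg_in n (G : graph n) (x : 'I_n) (S : {set 'I_n}) : nat := #|G x :&: S|.
(* minimum degree (every degree is < n, so n is a neutral start value) *)
Definition mindeg n (G : graph n) : nat := \big[minn/n]_(x : 'I_n) deg G x.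

Fixpoint ball n (G : graph n) (u : 'I_n) (i : nat) : {set 'I_n} :=
  match i with
  | 0 => [set u]
  | i'.+1 => ball G u i' :|: \bigcup_(y in ball G u i') G y
  end.
Definition sphere n (G : graph n) (u : 'I_n) (i : nat) : {set 'I_n} :=
  match i with
  | 0 => [set u]
  | i'.+1 => ball G u i :\: ball G u i'
  end.

(* The choices made by all nodes in one round: node x picks the pair (v,w). *)
Definition picks (n : nat) := {ffun 'I_n -> 'I_n * 'I_n}.

(* probability that node x picks the pair p in graph G: v,w independent uniform
   neighbours of x.  (Isolated nodes, which never occur for connected graphs
   with n >= 2, deterministically pick (x,x), i.e. do nothing.) *)
Definition pick_weight n (G : graph n) (x : 'I_n) (p : 'I_n * 'I_n) : R :=
  if G x == set0 then (if (p.1 == x) && (p.2 == x) then R1 else R0)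
  else if (p.1 \in G x) && (p.2 \in G x) then pow (Rinv (INR (deg G x))) 2 else R0.

Definition round_weight n (G : graph n) (c : picks n) : R :=
  foldr Rmult R1 [seq pick_weight G x (c x) | x <- enum 'I_n].

(* G_{t+1} = G_t plus all edges {v,w}, v <> w, picked in round t *)
Definition step n (G : graph n) (c : picks n) : graph n :=
  [ffun y => G y :|: [set z | [exists x, ((c x).1 != (c x).2) &&
        ((((c x).1 == y) && ((c x).2 == z)) || (((c x).2 == y) && ((c x).1 == z)))]]].

Fixpoint traj n (G : graph n) (cs : seq (picks n)) : seq (graph n) :=
  match cs with
  | [::] => [:: G]
  | c :: cs' => G :: traj (step G c) cs'
  end.

Fixpoint traj_weight n (G : graph n) (cs : seq (picks n)) : R :=
  match cs with
  | [::] => R1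
  | c :: cs' => Rmult (round_weight G c) (traj_weight (step G c) cs')
  end.

Definition seq_of_rounds n T (cs : {ffun 'I_T -> picks n}) : seq (picks n) :=
  [seq cs i | i <- enum 'I_T].

Definition Prob n (G0 : graph n) (T : nat) (E : seq (graph n) -> bool) : R :=
  foldr Rplus R0
    [seq (if E (traj G0 (seq_of_rounds cs)) then traj_weight G0 (seq_of_rounds cs) else R0)
    | cs <- enum {ffun 'I_T -> picks n}].

(* The event of the lemma, with d0 = delta_0:
   (for all t < T, #{x in N^1_t(u) | d_t(x, N^2_t(u)) >= d0/2} > d0/4)
   and d_T(u) < 5/4 d0   (written multiplied out over nat). *)
Definition event5 n (G0 : graph n) (u : 'I_n) (T : nat) (gs : seq (graph n)) : bool :=
  let d0 := mindeg G0 in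
  [forall t : 'I_T,
     let Gt := nth G0 gs t in
     d0 < 4 * #|[set x in sphere Gt u 1 | d0 <= 2 * deg_in Gt x (sphere Gt u 2)]| ]
  && (4 * deg (nth G0 gs T) u < 5 * d0).

(* ceiling of a real number: ceil x = - floor (-x), floor y = up y - 1 *)
Definition Rceil (x : R) : Z := Z.sub 1 (up (Ropp x)).

Definition Tlen (C : R) (n : nat) : nat := Z.to_nat (Rceil (Rmult (Rmult C (INR n)) (ln (INR n)))).

(* A node x strongly tied to N^2(u) is a neighbour of u and has at least
   delta_0/2 neighbours at distance 2 from u; as long as d(u) < 5/4 delta_0,
   a crude count shows that at least 1/6 of the neighbours of x lie at distance
   2, so x picks (u, w) with w in N^2(u) -- which adds the new edge uw -- with
   probability at least 1/(6n).  The nodes choose independently, so in every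
   round of the event the degree of u grows with probability at least
   p = delta_0/(48 n).  An induction on the number of rounds then bounds the
   probability that at most j increments happen in m such rounds by
   2^j (1 - p/2)^m; this part is proved for an arbitrary monotone potential.
   Taking j = 2 delta_0 and m = T, the bound is below 1/n^2. *)

From HB Require Import structures.
From Stdlib Require Import Reals Lra ZArith.
From mathcomp Require Import all_boot zify.
Set Implicit Arguments. Unset Strict Implicit. Unset Printing Implicit Defensive.
Open Scope R_scope.

(* Rplus and Rmult as monoid laws, so that the big-operator library applies
   to the real sums and products defining the probabilities. *)
Lemma RplusA : associative Rplus. Proof. by move=> *; rewrite Rplus_assoc. Qed.
Lemma RmultA : associative Rmult. Proof. by move=> *; rewrite Rmult_assoc. Qed.
HB.instance Definition _ := Monoid.isComLaw.Build R R0 Rplus RplusA Rplus_comm Rplus_0_l.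
HB.instance Definition _ := Monoid.isComLaw.Build R R1 Rmult RmultA Rmult_comm Rmult_1_l.
HB.instance Definition _ := Monoid.isMulLaw.Build R R0 Rmult Rmult_0_l Rmult_0_r.
HB.instance Definition _ :=
  Monoid.isAddLaw.Build R Rmult Rplus Rmult_plus_distr_r Rmult_plus_distr_l.

Section RealSums.
Variable T : finType.
Implicit Types F H : T -> R.

Lemma sumR_le F H : (forall i, F i <= H i) ->
  \big[Rplus/R0]_i F i <= \big[Rplus/R0]_i H i.
Proof. by move=> FH; apply: big_ind2 => // *; lra. Qed.

Lemma sumR_ge0 F : (forall i, 0 <= F i) -> 0 <= \big[Rplus/R0]_i F i.
Proof. by move=> F0; apply: big_ind => // *; lra. Qed.

Lemma sumR_sub F H :
  \big[Rplus/R0]_i (F i - H i) = \big[Rplus/R0]_i F i - \big[Rplus/R0]_i H i.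
Proof. by apply: (big_rec3 (fun a b c => a = b - c)) => [|i a b c _ ->]; lra. Qed.

Lemma sumR_const_in (A : {pred T}) (c : R) :
  \big[Rplus/R0]_i (if i \in A then c else R0) = INR #|A| * c.
Proof.
rewrite -big_mkcond big_const; elim: #|A| => [|k IH]; first by simpl; lra.
by rewrite S_INR /= IH; lra.
Qed.

(* For numbers F i in [0,1]:  prod (1 - F i) * (1 + sum F i) <= 1.  This turns
   a lower bound on a sum of per-node success probabilities into a lower bound
   on the probability that at least one independent trial succeeds. *)
Lemma prodR_one_minus_le F : (forall i, 0 <= F i <= 1) ->
  \big[Rmult/R1]_i (1 - F i) * (1 + \big[Rplus/R0]_i F i) <= 1.
Proof.
move=> F01.
suff [_ [_ ?]] : 0 <= \big[Rmult/R1]_i (1 - F i) /\ 0 <= \big[Rplus/R0]_i F i /\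
  \big[Rmult/R1]_i (1 - F i) * (1 + \big[Rplus/R0]_i F i) <= 1 by lra.
apply: (big_rec2 (fun q s => 0 <= q /\ 0 <= s /\ q * (1 + s) <= 1)).
  by split; [|split]; lra.
move=> i q s _ [q0 [s0 qs]]; have [a0 a1] := F01 i.
have q1 : q <= 1 by nra.
by split; [nra | split; nra].
Qed.

End RealSums.

Lemma sumR_pair (T1 T2 : finType) (F : T1 * T2 -> R) :
  \big[Rplus/R0]_p F p = \big[Rplus/R0]_i \big[Rplus/R0]_j F (i, j).
Proof. by rewrite pair_big; apply: eq_bigr => -[]. Qed.

Section Process.
Variable n : nat.
Implicit Types (G : graph n) (c : picks n) (cs : seq (picks n)).

Lemma Prob_big G T E : Prob G T E = \big[Rplus/R0]_(cs : {ffun 'I_T -> picks n})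
  (if E (traj G (seq_of_rounds cs)) then traj_weight G (seq_of_rounds cs) else R0).
Proof. by rewrite /Prob foldrE big_map big_enum. Qed.

Lemma Prob_0 G E : Prob G 0 E = if E [:: G] then R1 else R0.
Proof.
rewrite Prob_big (eq_bigr (fun _ => if E [:: G] then R1 else R0)); last first.
  by move=> cs _; rewrite /seq_of_rounds enum_ord0.
by rewrite big_const card_ffun card_ord expn0 /=; case: (E _); rewrite Rplus_0_r.
Qed.

Definition ffcons T c (f : {ffun 'I_T -> picks n}) : {ffun 'I_T.+1 -> picks n} :=
  [ffun i => if unlift ord0 i is Some j then f j else c].

Lemma seq_ffcons T c f : seq_of_rounds (@ffcons T c f) = c :: seq_of_rounds f.
Proof.
rewrite /seq_of_rounds enum_ordSl /= ffunE unlift_none -map_comp; congr (_ :: _).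
by apply: eq_map => j /=; rewrite ffunE liftK.
Qed.

(* Markov decomposition: condition on the choices of the first round. *)
Lemma Prob_S G T E : Prob G T.+1 E =
  \big[Rplus/R0]_c (round_weight G c * Prob (step G c) T (fun gs => E (G :: gs))).
Proof.
rewrite Prob_big.
rewrite (reindex (fun p : picks n * {ffun 'I_T -> picks n} => ffcons p.1 p.2)) /=; last first.
  exists (fun cs : {ffun 'I_T.+1 -> picks n} => (cs ord0, [ffun j => cs (lift ord0 j)])).
    move=> [c f] _ /=; rewrite /ffcons ffunE unlift_none; congr (_, _).
    by apply/ffunP => j; rewrite !ffunE liftK.
  move=> cs _; apply/ffunP => i; rewrite /ffcons /= ffunE.
  by case: unliftP => [j ->|->] //; rewrite ffunE.
rewrite -(pair_big xpredT xpredT (fun c f =>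
  if E (traj G (seq_of_rounds (@ffcons T c f)))
  then traj_weight G (seq_of_rounds (ffcons c f)) else R0)) /=.
apply: eq_bigr => c _; rewrite Prob_big big_distrr /=.
by apply: eq_bigr => f _; rewrite seq_ffcons /=; case: (E _); rewrite ?Rmult_0_r.
Qed.

Lemma size_seq_of_rounds T (f : {ffun 'I_T -> picks n}) : size (seq_of_rounds f) = T.
Proof. by rewrite size_map size_enum_ord. Qed.

Lemma Prob_impossible G T E :
  (forall cs, size cs = T -> ~~ E (traj G cs)) -> Prob G T E = R0.
Proof.
move=> notE; rewrite Prob_big big1 // => f _.
by rewrite (negbTE (notE _ (size_seq_of_rounds f))).
Qed.

Lemma size_traj G cs : size (traj G cs) = (size cs).+1.
Proof. by elim: cs G => [|c cs IH] G //=; rewrite IH. Qed.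

Lemma nth_traj0 x G cs : nth x (traj G cs) 0 = G.
Proof. by case: cs. Qed.

Lemma last_traj x G cs : last x (traj G cs) = last G (traj G cs).
Proof. by case: cs. Qed.

Lemma nth_traj x G cs t : (t <= size cs)%N -> nth x (traj G cs) t = nth G (traj G cs) t.
Proof. by move=> Ht; apply: set_nth_default; rewrite size_traj ltnS. Qed.

Lemma pick_weight_ge0 G x p : 0 <= pick_weight G x p.
Proof.
rewrite /pick_weight; case: ifP => _; first by case: ifP => _; lra.
by case: ifP => _; [apply: pow2_ge_0 | lra].
Qed.

Lemma pick_weight_sum G x : \big[Rplus/R0]_p pick_weight G x p = 1.
Proof.
rewrite /pick_weight; case: eqP => [Gx0|/eqP Gx0].
  rewrite (bigD1 (x, x)) //= !eqxx /= big1 ?Rplus_0_r // => -[a b] /=.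
  by case: (a =P x) => [->|//]; case: (b =P x) => [->|//]; rewrite eqxx.
rewrite sumR_pair (eq_bigr (fun i =>
  if i \in G x then INR (deg G x) * (/ INR (deg G x)) ^ 2 else R0)); last first.
  move=> i _; case: ifP => Hi; last by rewrite big1.
  by rewrite -sumR_const_in; apply: eq_bigr => j _.
have /ltP/lt_INR dx0 : (0 < deg G x)%N by rewrite card_gt0.
by rewrite sumR_const_in -/(deg G x); field; move: dx0 => /=; lra.
Qed.

Definition pick_prob G x (B : pred ('I_n * 'I_n)) : R :=
  \big[Rplus/R0]_p (if B p then pick_weight G x p else R0).

Lemma pick_prob_ge0 G x B : 0 <= pick_prob G x B.
Proof. by apply: sumR_ge0 => p; case: ifP => _; [apply: pick_weight_ge0 | lra]. Qed.

Lemma pick_prob_le1 G x B : pick_prob G x B <= 1.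
Proof.
rewrite -(pick_weight_sum G x); apply: sumR_le => p.
by case: ifP => _; [lra | apply: pick_weight_ge0].
Qed.

Lemma round_weightE G c : round_weight G c = \big[Rmult/R1]_x pick_weight G x (c x).
Proof. by rewrite /round_weight foldrE big_map big_enum. Qed.

Lemma round_weight_ge0 G c : 0 <= round_weight G c.
Proof.
rewrite round_weightE; apply: big_ind => [|a b|x _]; [lra | exact: Rmult_le_pos |].
exact: pick_weight_ge0.
Qed.

Lemma round_weight_sum G : \big[Rplus/R0]_c round_weight G c = 1.
Proof.
rewrite (eq_bigr _ (fun c _ => round_weightE G c)).
rewrite -(bigA_distr_bigA (fun x p => pick_weight G x p)).
by rewrite big1 // => x _; rewrite pick_weight_sum.
Qed.

Lemma round_prob_none G (B : 'I_n -> pred ('I_n * 'I_n)) :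
  \big[Rplus/R0]_(c : picks n) (if [forall x, ~~ B x (c x)] then round_weight G c else R0)
  = \big[Rmult/R1]_x (1 - pick_prob G x (B x)).
Proof.
have factorE x : 1 - pick_prob G x (B x)
    = \big[Rplus/R0]_p (if B x p then R0 else pick_weight G x p).
  rewrite -(pick_weight_sum G x) /pick_prob -sumR_sub.
  by apply: eq_bigr => p _; case: ifP => _; ring.
rewrite (eq_bigr _ (fun x _ => factorE x)) bigA_distr_bigA /=.
apply: eq_bigr => c _; rewrite round_weightE.
case: (boolP [forall x, ~~ B x (c x)]) => [/forallP none | /forallPn [x /negPn Bx]].
  by apply: eq_bigr => x _; rewrite (negbTE (none x)).
by rewrite (bigD1 x) //= Bx Rmult_0_l.
Qed.

Definition succw (pot : graph n -> nat) G : R :=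
  \big[Rplus/R0]_(c : picks n) (if (pot G < pot (step G c))%N then round_weight G c else R0).

Lemma succw_ge pot G (B : 'I_n -> pred ('I_n * 'I_n)) :
  (forall c x, B x (c x) -> (pot G < pot (step G c))%N) ->
  1 - \big[Rmult/R1]_x (1 - pick_prob G x (B x)) <= succw pot G.
Proof.
move=> Bsucc; rewrite -round_prob_none -(round_weight_sum G) -sumR_sub.
apply: sumR_le => c; have := round_weight_ge0 G c.
case: (boolP [forall x, ~~ B x (c x)]) => [_|/forallPn [x /negPn Bx]].
  by case: ifP => _; lra.
by rewrite (Bsucc c x Bx); lra.
Qed.

Section CountingBound.
Variables (pot : graph n -> nat) (inv : graph n -> Prop) (ok : pred (graph n)) (p : R).
Hypothesis pot_step : forall G c, (pot G <= pot (step G c))%N.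
Hypothesis inv_step : forall G c, inv G -> inv (step G c).
Hypothesis p_le1 : p <= 1.
Hypothesis succw_lb : forall G, inv G -> ok G -> p <= succw pot G.

Lemma pot_nth_le_last G cs t : (t <= size cs)%N ->
  (pot (nth G (traj G cs) t) <= pot (last G (traj G cs)))%N.
Proof.
elim: cs G t => [|c cs IH] G [|t] //= t_le.
  rewrite last_traj; apply: leq_trans (pot_step G c) _.
  by have := IH (step G c) 0%N isT; rewrite nth_traj0.
by rewrite last_traj nth_traj // IH.
Qed.

Definition confined G m j (E : pred (seq (graph n))) : Prop :=
  forall cs, size cs = m -> E (traj G cs) ->
    (forall t, (t < m)%N -> ok (nth G (traj G cs) t)) /\
    (pot (last G (traj G cs)) < pot G + j)%N.

Lemma confined_impossible G m j E : confined G m.+1 j E -> ~~ ok G || (j == 0)%N ->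
  Prob G m.+1 E = R0.
Proof.
move=> conf stop; apply: Prob_impossible => cs size_cs; apply/negP => Ecs.
have [okt pot_last] := conf cs size_cs Ecs.
have := okt 0%N isT; rewrite nth_traj0 => okG.
move: stop; rewrite okG /= => /eqP j0.
have := pot_nth_le_last G (leq0n (size cs)); rewrite nth_traj0; lia.
Qed.

Lemma confined_step G m j E c : (0 < j)%N -> confined G m.+1 j E ->
  confined (step G c) m (if (pot G < pot (step G c))%N then j.-1 else j)
    (fun gs => E (G :: gs)).
Proof.
move=> j0 conf cs size_cs Ecs.
have [okt pot_last] := conf (c :: cs) (congr1 S size_cs) Ecs.
split=> [t t_lt|].
  by rewrite -(nth_traj G); [apply: (okt t.+1) | rewrite size_cs ltnW].
move: pot_last; rewrite /= last_traj; have := pot_step G c.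
by case: (ltnP (pot G) (pot (step G c))); lia.
Qed.

Lemma counting_bound m G j E : inv G -> confined G m j E ->
  Prob G m E <= 2 ^ j * (1 - p / 2) ^ m.
Proof.
have pow2_ge1 k : 1 <= 2 ^ k by apply: pow_R1_Rle; lra.
have q0 : 0 <= 1 - p / 2 by lra.
elim: m G j E => [|m IH] G j E invG conf.
  by rewrite Prob_0 /=; have := pow2_ge1 j; case: (E _); lra.
case: (boolP (~~ ok G || (j == 0)%N)) => [stop|].
  rewrite (confined_impossible conf stop).
  by apply: Rmult_le_pos; [have := pow2_ge1 j; lra | apply: pow_le].
rewrite negb_or negbK -lt0n => /andP [okG j0].
set A := 2 ^ j * (1 - p / 2) ^ m.
have A0 : 0 <= A by apply: Rmult_le_pos; [have := pow2_ge1 j; lra | apply: pow_le].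
(* each increase of the potential halves the bound for the remaining rounds *)
have per_round c : round_weight G c * Prob (step G c) m (fun gs => E (G :: gs)) <=
    A * round_weight G c
    - A / 2 * (if (pot G < pot (step G c))%N then round_weight G c else R0).
  have IHc := IH _ _ _ (inv_step c invG) (confined_step (c := c) j0 conf).
  have w0 := round_weight_ge0 G c.
  move: IHc; case: ifP => _ IHc.
    have -> : A * round_weight G c - A / 2 * round_weight G c
        = round_weight G c * (2 ^ j.-1 * (1 - p / 2) ^ m).
      by rewrite /A; case: (j) j0 => [//|j'] _ /=; field.
    exact: Rmult_le_compat_l.
  have -> : A * round_weight G c - A / 2 * R0 = round_weight G c * A by ring.
  exact: Rmult_le_compat_l.
rewrite Prob_S; apply: Rle_trans (sumR_le per_round) _.
rewrite sumR_sub -!big_distrr /= round_weight_sum -/(succw pot G).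
have := Rmult_le_compat_l (A / 2) _ _ ltac:(lra) (succw_lb invG okG).
by rewrite /A /=; nra.
Qed.

End CountingBound.

(* Edges are only added, so neighbourhoods and degrees never shrink. *)
Lemma step_sub G c y : G y \subset step G c y.
Proof. by rewrite /step ffunE subsetUl. Qed.

Lemma deg_step G c y : (deg G y <= deg (step G c) y)%N.
Proof. exact: subset_leq_card (step_sub G c y). Qed.

Definition symg G : Prop := forall x y : 'I_n, (y \in G x) = (x \in G y).

Lemma symg_step G c : symg G -> symg (step G c).
Proof.
move=> sym x y; rewrite /step !ffunE !inE sym; congr (_ || _).
apply: eq_existsb => z; case: (c z) => a b /=; congr (_ && _).
by rewrite orbC; congr (_ || _); apply: andbC.
Qed.

Section DegreeGrowth.
Variables (u : 'I_n) (d0 : nat).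

Definition tied G : {set 'I_n} :=
  [set x in sphere G u 1 | (d0 <= 2 * deg_in G x (sphere G u 2))%N].

(* states from which the event of the lemma can still be realised *)
Definition active G : bool :=
  (d0 < 4 * #|tied G|)%N && (4 * deg G u < 5 * d0)%N.

Definition closes G x (p : 'I_n * 'I_n) : bool :=
  (p.1 == u) && (p.2 \in G x :&: sphere G u 2).

(* the vertex set is nonempty, as it contains u *)
Lemma n_gt0 : 0 < INR n.
Proof. by apply: lt_0_INR; apply/ltP; exact: leq_ltn_trans (leq0n _) (ltn_ord u). Qed.

Lemma ball1E G : ball G u 1 = u |: G u.
Proof. by rewrite /= big_set1. Qed.

Lemma sphere1_adj G x : symg G -> x \in sphere G u 1 -> u \in G x.
Proof.
move=> sym; rewrite /sphere inE ball1E !inE => /andP [xu /orP [/eqP xeu | xGu]].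
  by rewrite xeu eqxx in xu.
by rewrite sym.
Qed.

Lemma sphere2_notin G w : w \in sphere G u 2 -> (w \notin G u) && (w != u).
Proof.
rewrite /sphere inE ball1E => /andP [w_notin _]; move: w_notin.
by rewrite !inE negb_or eq_sym; case/andP => -> ->.
Qed.

Lemma closes_deg_step G c x : closes G x (c x) -> (deg G u < deg (step G c) u)%N.
Proof.
rewrite /closes; case cx: (c x) => [a w] /= /andP [/eqP a_u w_S].
have /andP [w_notin w_neq] : (w \notin G u) && (w != u).
  by apply: sphere2_notin; move: w_S; rewrite inE => /andP [].
apply: proper_card; apply/properP; split; first exact: step_sub.
exists w => //; rewrite /step ffunE !inE; apply/orP; right.
by apply/existsP; exists x; rewrite cx /= a_u eq_sym w_neq !eqxx.
Qed.

Lemma pick_prob_closes G x : symg G -> x \in sphere G u 1 ->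
  pick_prob G x (closes G x) = INR #|G x :&: sphere G u 2| * (/ INR (deg G x)) ^ 2.
Proof.
move=> sym x1; have uGx := sphere1_adj sym x1.
have Gx0 : G x != set0 by apply/set0Pn; exists u.
rewrite /pick_prob sumR_pair (bigD1 u) //= [X in _ + X]big1 ?Rplus_0_r; last first.
  by move=> i /negbTE iu; apply: big1 => j _; rewrite /closes /= iu.
rewrite -sumR_const_in; apply: eq_bigr => w _; rewrite /closes /= eqxx /=.
case: ifP => // w_S; rewrite /pick_weight (negbTE Gx0) /= uGx.
by move: w_S; rewrite inE => /andP [->].
Qed.

(* A strongly tied node has at least a sixth of its neighbours in N^2(u),
   as long as d(u) < 5/4 d0: its other neighbours lie in u |: N(u). *)
Lemma tied_deg_bound G x : (0 < d0)%N -> (4 * deg G u < 5 * d0)%N ->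
  x \in tied G -> (deg G x <= 6 * #|G x :&: sphere G u 2|)%N.
Proof.
move=> d0_gt0 deg_u; rewrite inE => /andP [x1 tiedx].
have ball1_card : (#|ball G u 1| <= 1 + deg G u)%N.
  by rewrite ball1E; apply: leq_trans (leq_card_setU _ _) _; rewrite cards1.
have Gx_sub : G x \subset ball G u 1 :|: (G x :&: sphere G u 2).
  apply/subsetP => y yGx; rewrite in_setU; case y1: (y \in ball G u 1) => //=.
  rewrite in_setI yGx /= /sphere in_setD y1 /= in_setU; apply/orP; right.
  apply/bigcupP; exists x => //.
  by move: x1; rewrite inE => /andP [].
apply: leq_trans (subset_leq_card Gx_sub) _.
apply: leq_trans (leq_card_setU _ _) _.
by move: ball1_card tiedx deg_u; rewrite /deg_in /deg; lia.
Qed.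

Lemma pick_prob_closes_lb G x : symg G -> (0 < d0)%N -> (4 * deg G u < 5 * d0)%N ->
  x \in tied G -> / (6 * INR n) <= pick_prob G x (closes G x).
Proof.
move=> sym d0_gt0 deg_u xt; have x1 : x \in sphere G u 1 by move: xt; rewrite inE => /andP [].
rewrite pick_prob_closes //.
have /leP/le_INR dx_le : (deg G x * deg G x <= 6 * #|G x :&: sphere G u 2| * n)%N.
  apply: leq_mul; first exact: tied_deg_bound.
  by have := max_card (mem (G x)); rewrite card_ord.
have /ltP/lt_0_INR dx_gt0 : (0 < deg G x)%N by rewrite card_gt0; apply/set0Pn; exists u;
  exact: sphere1_adj.
move: dx_le dx_gt0; rewrite !mult_INR.
set d := INR (deg G x); set s := INR #|_| => dx_le dx_gt0.
have n0 := n_gt0.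
rewrite (_ : INR 6 = 6) in dx_le; last by simpl; lra.
apply: (Rmult_le_reg_r (6 * INR n * (d * d))); first by apply: Rmult_lt_0_compat; nra.
have -> : / (6 * INR n) * (6 * INR n * (d * d)) = d * d by field; lra.
have -> : s * (/ d) ^ 2 * (6 * INR n * (d * d)) = 6 * s * INR n by field; lra.
lra.
Qed.

Lemma succw_active G : symg G -> (0 < d0)%N -> active G ->
  INR d0 / (48 * INR n) <= succw (fun H => deg H u) G.
Proof.
move=> sym d0_gt0 /andP [many deg_u]; have n0 := n_gt0.
pose B x : pred ('I_n * 'I_n) := if x \in tied G then closes G x else pred0.
have B_succ c x : B x (c x) -> (deg G u < deg (step G c) u)%N.
  by rewrite /B; case: ifP => // _; apply: closes_deg_step.
apply: Rle_trans (succw_ge (B := B) B_succ).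
have := prodR_one_minus_le (fun x : 'I_n => conj (pick_prob_ge0 G x (B x)) (pick_prob_le1 G x (B x))).
set P := \big[Rmult/R1]_x _; set s := \big[Rplus/R0]_x _ => P_bound.
have P_ge0 : 0 <= P by apply: big_ind => [|a b|x _]; [lra | nra | have := pick_prob_le1 G x (B x); lra].
set k := #|tied G|.
have s_ge : INR k * / (6 * INR n) <= s.
  rewrite -sumR_const_in; apply: sumR_le => x; rewrite /B.
  by case: ifP => xt; [exact: pick_prob_closes_lb | apply: pick_prob_ge0].
have /leP/le_INR k_le : (k <= n)%N by have := max_card (mem (tied G)); rewrite card_ord.
have /leP/le_INR d0_le : (d0 <= 4 * k)%N by apply: ltnW.
rewrite mult_INR /= in d0_le.
set s0 := INR k * / (6 * INR n) in s_ge.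
have s0_ge : INR d0 / (48 * INR n) <= s0 / 2.
  have -> : s0 / 2 = INR d0 / (48 * INR n) + (4 * INR k - INR d0) / (48 * INR n).
    by rewrite /s0; field; lra.
  suff : 0 <= (4 * INR k - INR d0) / (48 * INR n) by lra.
  by apply: Rmult_le_pos; [lra | apply/Rlt_le/Rinv_0_lt_compat; lra].
have s0_le1 : s0 <= 1.
  rewrite /s0; apply: (Rmult_le_reg_r (6 * INR n)); first lra.
  by rewrite Rmult_assoc Rinv_l; lra.
have s0_ge0 : 0 <= s0 by apply: Rmult_le_pos; [apply: pos_INR | apply: Rlt_le; apply: Rinv_0_lt_compat; lra].
nra.
Qed.

End DegreeGrowth.

End Process.

(* The event of the lemma is confined: it stays in active states for T rounds
   while the degree of u, which ends below 5/4 d0, grows fewer than 2 d0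
   times. *)
Lemma event5_confined n (G0 : graph n) u T : let d0 := mindeg G0 in
  confined (fun G => deg G u) (active u d0) G0 T (2 * d0) (event5 G0 u T).
Proof.
move=> d0 cs size_cs /andP [/forallP many deg_T].
have deg_last : (4 * deg (last G0 (traj G0 cs)) u < 5 * d0)%N.
  by rewrite -nth_last size_traj size_cs.
split; first last; [lia | move=> t t_lt].
apply/andP; split; first exact: (many (Ordinal t_lt)).
have := @pot_nth_le_last n (fun G => deg G u) (fun G c => deg_step G c u) G0 cs t.
by rewrite size_cs ltnW //; lia.
Qed.

Lemma exp_pow a k : exp a ^ k = exp (INR k * a).
Proof.
elim: k => [|k IH]; first by rewrite /= Rmult_0_l exp_0.
by rewrite S_INR /= IH -exp_plus; f_equal; ring.
Qed.

Lemma exp_le_mono a b : a <= b -> exp a <= exp b.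
Proof. by case=> [lt|->]; [left; apply: exp_increasing | lra]. Qed.

Lemma pow_one_minus_le_exp x T : 0 <= x <= 1 -> (1 - x) ^ T <= exp (- (INR T * x)).
Proof.
move=> x01; rewrite (_ : - (INR T * x) = INR T * - x); last by ring.
rewrite -exp_pow; apply: pow_incr; split; first lra.
by have := exp_ineq1_le (- x); lra.
Qed.

Lemma tail_bound (n d0 T : nat) : (2 <= n)%N -> (0 < d0 <= n)%N ->
  384 * INR n * ln (INR n) <= INR T ->
  2 ^ (2 * d0) * (1 - INR d0 / (48 * INR n) / 2) ^ T <= / INR n ^ 2.
Proof.
move=> n2 /andP [/leP/le_INR d0_ge1 /leP/le_INR d0_le] T_ge.
have n_ge2 : 2 <= INR n by have := le_INR 2 n (leP n2); simpl; lra.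
rewrite /= in d0_ge1.
have ln2_le : ln 2 <= ln (INR n).
  by case: (Rle_lt_or_eq_dec _ _ n_ge2) => [lt|<-]; [left; apply: ln_increasing; lra | lra].
have ln2_gt0 : 0 < ln 2 by rewrite -ln_1; apply: ln_increasing; lra.
set x := INR d0 / (48 * INR n) / 2.
have x_eq : x * (96 * INR n) = INR d0 by rewrite /x; field; lra.
have x_ge0 : 0 <= x by nra.
have x_le1 : x <= 1 by nra.
have pow2E : 2 ^ (2 * d0) = exp (INR (2 * d0) * ln 2) by rewrite -exp_pow exp_ln //; lra.
have invn2E : / INR n ^ 2 = exp (- (INR 2 * ln (INR n))).
  by rewrite exp_Ropp -exp_pow exp_ln //; lra.
rewrite pow2E invn2E.
apply: Rle_trans (Rmult_le_compat_l _ _ _ (Rlt_le _ _ (exp_pos _))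
  (pow_one_minus_le_exp T (conj x_ge0 x_le1))) _.
rewrite -exp_plus; apply: exp_le_mono.
have Tx_ge : 4 * INR d0 * ln (INR n) <= INR T * x by nra.
rewrite mult_INR /=; nra.
Qed.

Lemma Tlen_ge C n : 0 <= C * INR n * ln (INR n) -> C * INR n * ln (INR n) <= INR (Tlen C n).
Proof.
rewrite /Tlen /Rceil; set x := C * INR n * ln (INR n) => x_ge0.
have [up_gt up_le] := archimed (- x).
have x_le : x <= IZR (1 - up (- x)) by rewrite minus_IZR; lra.
have up_ge0 : (0 <= 1 - up (- x))%Z by apply: le_IZR; lra.
by rewrite INR_IZR_INZ Z2Nat.id.
Qed.

Lemma mindeg_le n (G : graph n) : (mindeg G <= n)%N.
Proof.
rewrite /mindeg; apply: (big_ind (fun v => v <= n)%N) => // [a b a_le _|x _].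
  exact: leq_trans (geq_minl a b) a_le.
by rewrite /deg; have := max_card (mem (G x)); rewrite card_ord.
Qed.

Close Scope R_scope.

Theorem lemma5 :
  exists C : R, Rlt R0 C /\
    forall (n : nat) (G0 : graph n) (u : 'I_n),
      2 <= n -> simple_graph G0 -> connected_graph G0 ->
      Rle (Prob G0 (Tlen C n) (event5 G0 u (Tlen C n))) (Rinv (pow (INR n) 2)).
Proof.
Open Scope R_scope.
exists 384; split; first lra.
move=> n G0 u n2 [sym _] _.
have n_ge2 : 2 <= INR n by have := le_INR 2 n (leP n2); simpl; lra.
have ln_ge0 : 0 <= ln (INR n) by rewrite -ln_1; left; apply: ln_increasing; lra.
have T_ge := @Tlen_ge 384 n ltac:(apply: Rmult_le_pos; lra).
set T := Tlen 384 n in T_ge *; set d0 := mindeg G0.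
case: (posnP d0) => [d0_0 | d0_gt0].
  rewrite Prob_impossible => [|cs _]; last by rewrite /event5 -/d0 d0_0 muln0 ltn0 andbF.
  by apply/Rlt_le/Rinv_0_lt_compat/pow_lt; lra.
apply: Rle_trans (@tail_bound n d0 T n2 _ T_ge); last by rewrite d0_gt0 mindeg_le.
apply: (counting_bound (pot := fun G => deg G u) (inv := @symg n) (ok := active u d0)) => //.
- by move=> G c; apply: deg_step.
- exact: symg_step.
- have /leP/le_INR := mindeg_le G0; rewrite -/d0 => d0_le.
  apply: (Rmult_le_reg_r (48 * INR n)); first lra.
  by rewrite /Rdiv Rmult_assoc Rinv_l; lra.
- by move=> G symG; apply: succw_active.
- exact: event5_confined.
Qed.
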